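(* Let $1\le m\le k-1$, $K=\{1,\dots,k\}$, $T\subseteq K$ with $|T|=m$, and let $\mathcal{V}=\{\bm v_1,\dots,\bm v_{m-1}\}$ be $m-1$ distinct points of $PG(k-1,q)$ with $\mathrm{supp}(\bm v_i)\cap T=\emptyset$ for all $i$. Then the set $M=X^T\cup Y^T_{\mathcal V}\cup Z^T$ is a $(k-m)$-block over $\mathbb{F}_q$; that is, every $m$-dimensional linear subspace of $\mathbb{F}_q^k$ contains (a representing vector of) at least one point of $M$.
   Context: Points of $PG(k-1,q)$ are one-dimensional subspaces of $\mathbb{F}_q^k$, identified with any nonzero representing vector; the support $\mathrm{supp}(\bm x)=\{i:x_i\neq0\}$ of a point is well defined. $\bm e_i$ denotes the $i$-th standard unit vector of $\mathbb{F}_q^k$. Define $X^T=\{\bm x\in PG(k-1,q): \mathrm{supp}(\bm x)\cap T=\emptyset\}$; $Y^T_{\mathcal V}=\{\bm x\in PG(k-1,q): |\mathrm{supp}(\bm x)\cap T|=1\}$ minus all points represented by $\bm v_i+\lambda\bm e_j$ with $\bm v_i\in\mathcal V$, $j\in T$, $\lambda\in\mathbb{F}_q\setminus\{0\}$; $Z^T=\{\bm x\in PG(k-1,q): \mathrm{supp}(\bm x)\text{ is a 2-element subset of }T\}$. For $1\le r\le k-1$, a set $M$ of points of $PG(k-1,q)$ is an $r$-block if every $(k-r)$-dimensional linear subspace of $\mathbb{F}_q^k$ contains at least one point of $M$. *)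

(* Points of PG(k-1,q) are represented by nonzero row vectors
   in 'rV[F]_k; all predicates below are invariant under nonzero scaling. *)
From HB Require Import structures.
From mathcomp Require Import all_boot all_order all_algebra.
Set Implicit Arguments. Unset Strict Implicit. Unset Printing Implicit Defensive.
Import GRing.Theory.
Local Open Scope ring_scope.

Definition supp (F : fieldType) (k : nat) (x : 'rV[F]_k) : {set 'I_k} :=
  [set i | x 0 i != 0].

Definition unitv (F : fieldType) (k : nat) (j : 'I_k) : 'rV[F]_k := delta_mx 0 j.
Arguments unitv F {k} j.

Definition inX (F : fieldType) (k : nat) (T : {set 'I_k}) (x : 'rV[F]_k) : bool :=
  supp x :&: T == set0.

Definition inY (F : finFieldType) (k n : nat) (T : {set 'I_k})
    (V : 'I_n -> 'rV[F]_k) (x : 'rV[F]_k) : bool :=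
  (#|supp x :&: T| == 1%N) &&
  ~~ [exists i : 'I_n, exists j in T, exists lam : F, exists c : F,
        [&& lam != 0, c != 0 & x == c *: (V i + lam *: unitv F j)]].

Definition inZ (F : fieldType) (k : nat) (T : {set 'I_k}) (x : 'rV[F]_k) : bool :=
  (#|supp x| == 2%N) && (supp x \subset T).

Definition inM (F : finFieldType) (k n : nat) (T : {set 'I_k})
    (V : 'I_n -> 'rV[F]_k) (x : 'rV[F]_k) : bool :=
  [|| inX T x, inY T V x | inZ T x].

(* Let U have dimension m = |T|.  If U meets the coordinate subspace
   {x | x_T = 0}, it contains a point of X^T.  Otherwise restriction to the
   coordinates in T maps U isomorphically onto F^T, so for each j in T some
   w_j in U restricts to e_j; w_j has exactly one support element in T.  If
   no w_j lies in Y^T_V, each w_j is a multiple of some v_i + lam e_j0 with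
   j0 in T, and as there are m indices j but only m - 1 points v_i, two of
   them, w_j and w_j', share the same v_i.  A combination of w_j and w_j'
   cancels v_i, hence is supported on T, and restricts to a combination of
   e_j and e_j': it is a point of Z^T. *)

From HB Require Import structures.
From mathcomp Require Import all_boot all_order all_algebra.

Set Implicit Arguments.
Unset Strict Implicit.
Unset Printing Implicit Defensive.
Import GRing.Theory.
Local Open Scope ring_scope.

Section Restriction.
Variables (F : fieldType) (k : nat) (T : {set 'I_k}).

Definition restr_mx : 'M[F]_(k, #|T|) := \matrix_(i, l) (i == enum_val l)%:R.

Lemma restr_mxE (x : 'rV[F]_k) l : (x *m restr_mx) 0 l = x 0 (enum_val l).
Proof.
rewrite !mxE (bigD1 (enum_val l)) //= mxE eqxx mulr1 big1 ?addr0 // => i /negbTE ne_il.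
by rewrite mxE ne_il mulr0.
Qed.

Lemma restr_mxP (x y : 'rV[F]_k) :
  reflect {in T, forall t, x 0 t = y 0 t} (x *m restr_mx == y *m restr_mx).
Proof.
apply: (iffP eqP) => [xy t tT | xy].
  have := congr1 (fun z : 'rV[F]_#|T| => z 0 (enum_rank_in tT t)) xy.
  by rewrite !restr_mxE enum_rankK_in.
by apply/rowP => l; rewrite !restr_mxE xy ?enum_valP.
Qed.

Lemma restr_mx_eq0 (x : 'rV[F]_k) : (x *m restr_mx == 0) = inX T x.
Proof.
rewrite -(mul0mx _ restr_mx); apply/restr_mxP/eqP => [x0 | /setP xT t tT].
  apply/setP => t; rewrite !inE; case: (boolP (t \in T)) => [tT | _]; last by rewrite andbF.
  by rewrite x0 // mxE eqxx.
by have := xT t; rewrite !inE tT andbT mxE => /negbFE/eqP.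
Qed.

Definition restr_lift (U : 'M[F]_k) (y : 'rV[F]_#|T|) : 'rV[F]_k :=
  y *m pinvmx (U *m restr_mx) *m U.

Lemma restr_lift_sub U y : (restr_lift U y <= U)%MS.
Proof. exact: submxMl. Qed.

(* When [U] meets [kermx restr_mx] trivially, [U *m restr_mx] has rank
   [\rank U = #|T|], i.e. restriction maps [U] onto the coordinates in [T]. *)
Lemma inX_or_restr_liftK (U : 'M[F]_k) : \rank U = #|T| ->
  (exists x, [/\ x != 0, (x <= U)%MS & inX T x]) \/
  (forall y, restr_lift U y *m restr_mx = y).
Proof.
move=> rU; have [UK | ] := eqVneq (U :&: kermx restr_mx)%MS 0.
  right => y; rewrite -mulmxA mulmxKpV //; apply/submx_full.
  by rewrite /row_full -[X in _ == X]rU -(mxrank_mul_ker U restr_mx) UK mxrank0 addn0.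
case/rowV0Pn => x; rewrite sub_capmx => /andP[xU /sub_kermxP x0] nz_x.
by left; exists x; split => //; rewrite -restr_mx_eq0 x0.
Qed.

End Restriction.

Lemma pigeonhole_in (I J : finType) (A : {set I}) (P : I -> J -> bool) :
  (#|J| < #|A|)%N -> {in A, forall a, exists j, P a j} ->
  exists a b j, [/\ a \in A, b \in A, a != b, P a j & P b j].
Proof.
move=> ltJA exP; pose f a := [pick j | P a j].
have fA a : a \in A -> exists2 j, f a = Some j & P a j.
  move=> aA; rewrite /f; case: pickP => [j Pj | noP]; first by exists j.
  by have [j /[!noP]] := exP a aA.
have : ~~ dinjectiveb f A.
  apply: contraL ltJA => /dinjectiveP f_inj; rewrite -leqNgt.
  have <- : #|[set~ None : option J]| = #|J| by rewrite cardsC1 card_option.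
  rewrite -(card_in_imset f_inj) subset_leq_card //.
  by apply/subsetP => _ /imsetP[a aA ->]; have [j -> _] := fA a aA; rewrite !inE.
case/dinjectivePn => a aA [b /[!inE] /andP[ba bA] fab].
have [j fa Pa] := fA a aA; have [j' fb Pb] := fA b bA.
by exists a, b, j; split; rewrite 1?eq_sym //; move: fab; rewrite fa fb => -[->].
Qed.

Section BlockPoints.
Variables (F : fieldType) (k : nat) (T : {set 'I_k}).

Lemma unitvE (j t : 'I_k) : unitv F j 0 t = (t == j)%:R.
Proof. by rewrite mxE. Qed.

Lemma supp_unitv_on (w : 'rV[F]_k) j : j \in T ->
  {in T, forall t, w 0 t = unitv F j 0 t} -> supp w :&: T = [set j].
Proof.
move=> jT wj; apply/setP => t; rewrite !inE.
case: (boolP (t \in T)) => [tT | tT]; last first.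
  by rewrite andbF; apply/esym/negbTE; apply: contraNneq tT => ->.
by rewrite andbT wj // unitvE; case: (t == j); rewrite ?oner_eq0 ?eqxx.
Qed.

Lemma supp_neq0 (x : 'rV[F]_k) i : i \in supp x -> x != 0.
Proof. by rewrite inE; apply: contraNneq => ->; rewrite mxE. Qed.

Lemma unitv_on_neq0 (w : 'rV[F]_k) j : j \in T ->
  {in T, forall t, w 0 t = unitv F j 0 t} -> w != 0.
Proof.
by move=> jT wj; apply: (supp_neq0 (i := j)); rewrite inE wj // unitvE eqxx oner_eq0.
Qed.

Lemma supp_unitv_combination (w w' : 'rV[F]_k) j j' c c' :
  j \in T -> j' \in T -> j != j' -> c != 0 -> c' != 0 ->
  {in T, forall t, w 0 t = unitv F j 0 t} ->
  {in T, forall t, w' 0 t = unitv F j' 0 t} ->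
  {in ~: T, forall t, (c' *: w - c *: w') 0 t = 0} ->
  supp (c' *: w - c *: w') = [set j; j'].
Proof.
move=> jT j'T jj' nz_c nz_c' wj wj' offT; apply/setP => t; rewrite !inE.
case: (boolP (t \in T)) => [tT | tT]; last first.
  rewrite offT ?inE // eqxx /=.
  by apply/esym/norP; split; apply: contraNneq tT => ->.
rewrite !mxE wj // wj' // !unitvE; have [-> | tj] := eqVneq t j.
  by rewrite (negbTE jj') mulr1 mulr0 subr0 nz_c'.
have [_ | tj'] := eqVneq t j'; first by rewrite mulr0 mulr1 sub0r oppr_eq0 nz_c.
by rewrite !mulr0 subr0 eqxx.
Qed.

Lemma inZ_pair (x : 'rV[F]_k) j j' :
  j \in T -> j' \in T -> j != j' -> supp x = [set j; j'] -> inZ T x.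
Proof.
move=> jT j'T jj' supp_x; rewrite /inZ supp_x cards2 jj' /=.
by apply/subsetP => t /set2P[] ->.
Qed.

Lemma translates_combination (v : 'rV[F]_k) c c' lam lam' j0 j0' t :
  j0 \in T -> j0' \in T -> t \notin T ->
  (c' *: (c *: (v + lam *: unitv F j0)) - c *: (c' *: (v + lam' *: unitv F j0'))) 0 t = 0.
Proof.
move=> j0T j0'T tT; have tj (j : 'I_k) : j \in T -> (t == j) = false.
  by move=> jT; apply: contraNF tT => /eqP ->.
by rewrite !mxE !tj // !andbF !mulr0 !addr0 mulrCA subrr.
Qed.

End BlockPoints.

Section Translates.
Variables (F : finFieldType) (k n : nat) (T : {set 'I_k}) (V : 'I_n -> 'rV[F]_k).

(* [x] represents the point [v_i + lam e_j0] excluded from [Y^T_V]. *)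
Definition on_translate i (x : 'rV[F]_k) : bool :=
  [exists j0 in T, exists lam : F, exists c : F,
     [&& lam != 0, c != 0 & x == c *: (V i + lam *: unitv F j0)]].

Lemma inY_unitv_on (w : 'rV[F]_k) j : j \in T ->
  {in T, forall t, w 0 t = unitv F j 0 t} ->
  inY T V w = ~~ [exists i, on_translate i w].
Proof. by move=> jT wj; rewrite /inY (supp_unitv_on jT wj) cards1 eqxx. Qed.

Lemma inZ_translates_combination (w w' : 'rV[F]_k) i j j' :
  j \in T -> j' \in T -> j != j' ->
  {in T, forall t, w 0 t = unitv F j 0 t} ->
  {in T, forall t, w' 0 t = unitv F j' 0 t} ->
  on_translate i w -> on_translate i w' ->
  exists a b, (a *: w + b *: w' != 0) && inZ T (a *: w + b *: w').
Proof.
move=> jT j'T jj' wj wj'.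
case/exists_inP => j0 j0T /existsP[lam /existsP[c /and3P[_ nz_c /eqP w_tr]]].
case/exists_inP => j0' j0'T /existsP[lam' /existsP[c' /and3P[_ nz_c' /eqP w'_tr]]].
have supp_x : supp (c' *: w - c *: w') = [set j; j'].
  apply: supp_unitv_combination wj wj' _ => // t; rewrite inE => tT.
  by rewrite w_tr w'_tr (translates_combination (T := T)).
exists c', (- c); rewrite scaleNr (inZ_pair jT j'T jj' supp_x) andbT.
by apply: (supp_neq0 (i := j)); rewrite supp_x set21.
Qed.

End Translates.

Theorem mainTheorem16 (F : finFieldType) (k m : nat)
    (Hm1 : (1 <= m)%N) (Hmk : (m <= k - 1)%N)
    (T : {set 'I_k}) (HT : #|T| = m)
    (V : 'I_(m - 1) -> 'rV[F]_k)
    (HV0 : forall i, V i != 0)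
    (HVdist : forall i j, i != j -> forall c : F, V i != c *: V j)
    (HVsupp : forall i, supp (V i) :&: T = set0) :
  forall U : 'M[F]_k, \rank U = m ->
    exists x : 'rV[F]_k, [/\ x != 0, (x <= U)%MS & inM T V x].
Proof.
move=> U rU; rewrite -HT in rU.
have [[x [nz_x xU xX]] | liftK] := inX_or_restr_liftK rU.
  by exists x; rewrite /inM xX.
pose w j := restr_lift U (unitv F j *m restr_mx F T).
have w_on_T j : {in T, forall t, w j 0 t = unitv F j 0 t}.
  by apply/restr_mxP; rewrite liftK.
case: (boolP [exists j in T, inY T V (w j)]) => [/exists_inP[j jT wY] | /exists_inPn noY].
  exists (w j); split; last by rewrite /inM wY orbT.
    exact: unitv_on_neq0 jT (w_on_T j).
  exact: restr_lift_sub.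
have w_on_translate : {in T, forall j, exists i, on_translate T V i (w j)}.
  move=> j jT; move: (noY j jT).
  by rewrite (inY_unitv_on _ jT (w_on_T j)) negbK => /existsP[i wi]; exists i.
have [|j [j' [i [jT j'T jj' wi w'i]]]] := pigeonhole_in _ w_on_translate.
  by rewrite card_ord HT subn1 prednK.
have [a [b /andP[nz_x xZ]]] :=
  inZ_translates_combination jT j'T jj' (w_on_T j) (w_on_T j') wi w'i.
exists (a *: w j + b *: w j'); split => //; last by rewrite /inM xZ !orbT.
by rewrite addmx_sub ?scalemx_sub ?restr_lift_sub.
Qed.
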